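(* Every $3$-regular graph $H$ on $n>6$ vertices satisfies $m(H)\le 4$.
   Context: All graphs are finite and simple. For graphs $G_1=(V,E_1)$, $G_2=(V,E_2)$, their symmetric difference is $(V,E_1\oplus E_2)$, where $E_1\oplus E_2$ is the set of edges in exactly one of $E_1,E_2$. A connectivity code for $H=(V,E)$ is a collection of distinct spanning subgraphs $(V,E')$, $E'\subseteq E$, such that the symmetric difference of any two distinct members is a connected graph on $V$; $m(H)$ is the maximum cardinality of a connectivity code for $H$. *)

From mathcomp Require Import all_boot.
Set Implicit Arguments. Unset Strict Implicit. Unset Printing Implicit Defensive.

(* A finite simple graph on vertex type T is given by its edge set
   E : {set {set T}}, every edge being a 2-element subset of T. *)
Definition simple_edges (T : finType) (E : {set {set T}}) : Prop :=
  forall e, e \in E -> #|e| = 2.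

Definition adj (T : finType) (E : {set {set T}}) : rel T :=
  fun x y => (x != y) && ([set x; y] \in E).

Definition connected_graph (T : finType) (E : {set {set T}}) : Prop :=
  forall x y : T, connect (adj E) x y.

Definition degree (T : finType) (E : {set {set T}}) (v : T) : nat :=
  #|[set e in E | v \in e]|.

Definition regular (T : finType) (E : {set {set T}}) (k : nat) : Prop :=
  forall v : T, degree E v = k.

Definition symdiff (T : finType) (E1 E2 : {set {set T}}) : {set {set T}} :=
  (E1 :\: E2) :|: (E2 :\: E1).

(* A connectivity code for H = (T, E): a collection C of (distinct, as C is
   a set) spanning subgraphs (T, E'), E' \subset E, such that the symmetric
   difference of any two distinct members is connected on T. *)
Definition connectivity_code (T : finType) (E : {set {set T}})
    (C : {set {set {set T}}}) : Prop :=
  (forall E', E' \in C -> E' \subset E) /\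
  (forall E1 E2, E1 \in C -> E2 \in C -> E1 != E2 ->
     connected_graph (symdiff E1 E2)).

From mathcomp Require Import all_boot.
From mathcomp Require Import zify.
Set Implicit Arguments. Unset Strict Implicit.

(* Suppose a 3-regular graph H = (T, E) on
   n > 6 vertices had a connectivity code with 5 members, and sum
   |E_i (+) E_j| over the 20 ordered pairs of distinct members.
   - Upper bound: an edge e lies in the symmetric difference of E_i, E_j iff
     exactly one of them contains e; if a members contain e and 5 - a do not,
     e is counted 2a(5 - a) <= 12 times, so the sum is at most 12|E| = 18n.
   - Lower bound: a connected spanning graph has at least n - 1 edges.  By the
     handshake lemma n is even, so when |E_i| and |E_j| have the same parity
     the (even) size of E_i (+) E_j is at least n.  At most 12 ordered pairs
     have different parities, so the sum is at least 20(n - 1) + 8.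
   Hence 20n - 12 <= 18n, i.e. n <= 6, a contradiction. *)

Section ConnectedEdges.
Variables (T : finType) (D : {set {set T}}) (r : T).
Hypothesis D_connected : connected_graph D.

Definition reach (v : T) (k : nat) : bool :=
  [exists p : k.-tuple T, path (adj D) v p && (last v p == r)].

Lemma reach_exists (v : T) : exists k, reach v k.
Proof.
have /connectP [p pP lp] := D_connected v r.
exists (size p); apply/existsP; exists (in_tuple p).
by rewrite /= pP -lp eqxx.
Qed.

Definition dist (v : T) : nat := ex_minn (reach_exists v).

Lemma dist_step (v : T) : v != r -> exists2 w, adj D v w & dist w < dist v.
Proof.
rewrite /dist; case: ex_minnP => m /existsP [[s /= /eqP sz]] /andP [pP /eqP lp] _.
case: s sz pP lp => [|w s] /= sz pP lp vr; first by rewrite lp eqxx in vr.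
move/andP: pP => [vw wP]; exists w => //.
case: ex_minnP => m' _ minm'.
have : reach w (size s) by apply/existsP; exists (in_tuple s); rewrite /= wP lp eqxx.
by move/minm'; rewrite -sz.
Qed.

Definition parent (v : T) : T :=
  odflt v [pick w | adj D v w && (dist w < dist v)].

Lemma parentP (v : T) : v != r -> adj D v (parent v) && (dist (parent v) < dist v).
Proof.
move=> vr; rewrite /parent; case: pickP => [w -> //|none].
by have [w w1 w2] := dist_step vr; move: (none w); rewrite w1 w2.
Qed.

(* The edges {v, parent v}, v <> r, are pairwise distinct edges of D. *)
Lemma card_edges_rooted : #|T| <= #|D|.+1.
Proof.
pose g v := [set v; parent v].
have g_inj : {in [set~ r] &, injective g}.
  move=> v v'; rewrite !in_setC1 => vr v'r gvv'; apply/eqP/negPn/negP => nvv.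
  have : v \in g v' by rewrite -gvv' set21.
  have : v' \in g v by rewrite gvv' set21.
  rewrite !in_set2 (negbTE nvv) eq_sym (negbTE nvv) /= => /eqP e1 /eqP e2.
  have /andP [_ lt1] := parentP vr; have /andP [_ lt2] := parentP v'r.
  by move: lt1 lt2; rewrite -e1 -e2 => lt1 /(ltn_trans lt1); rewrite ltnn.
have gD : g @: [set~ r] \subset D.
  apply/subsetP => e /imsetP [v]; rewrite in_setC1 => vr ->.
  by have /andP [/andP [_ ->] _] := parentP vr.
by have := subset_leq_card gD; rewrite card_in_imset // cardsC1; case: #|T|.
Qed.

End ConnectedEdges.

Lemma connected_card_edges (T : finType) (D : {set {set T}}) :
  connected_graph D -> #|T| <= #|D|.+1.
Proof.
move=> Dc; case: (posnP #|T|) => [-> //|/card_gt0P [r _]].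
exact: card_edges_rooted r Dc.
Qed.

Lemma handshake (T : finType) (E : {set {set T}}) (k : nat) :
  simple_edges E -> regular E k -> 2 * #|E| = k * #|T|.
Proof.
move=> Es Ek.
have -> : k * #|T| = \sum_(v : T) \sum_(e in E) (v \in e : nat).
  rewrite mulnC -sum_nat_const; apply: eq_bigr => v _.
  by rewrite -(Ek v) /degree -sum1dep_card big_mkcondr; apply: eq_bigr => e _; case: (v \in e).
rewrite exchange_big /= mulnC -sum_nat_const; apply: eq_bigr => e eE.
by rewrite -(Es e eE) -sum1_card big_mkcond; apply: eq_bigr => v _; case: (v \in e).
Qed.

Lemma odd_symdiff (T : finType) (E1 E2 : {set {set T}}) :
  odd #|symdiff E1 E2| = odd #|E1| (+) odd #|E2|.
Proof.
rewrite /symdiff cardsU.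
have -> : (E1 :\: E2) :&: (E2 :\: E1) = set0.
  by apply/setP => x; rewrite !inE; case: (x \in E1); case: (x \in E2).
rewrite cards0 subn0 -(cardsID E2 E1) -(cardsID E1 E2) setIC !oddD.
by case: (odd _); case: (odd _); case: (odd _).
Qed.

Lemma card_symdiff (T : finType) (E E1 E2 : {set {set T}}) :
  E1 \subset E -> E2 \subset E ->
  #|symdiff E1 E2| = \sum_(e in E) ((e \in E1) != (e \in E2) : nat).
Proof.
move=> E1E E2E; have sdE : symdiff E1 E2 \subset E.
  by rewrite /symdiff subUset !(subset_trans (subsetDl _ _)).
rewrite -(setIidPr sdE) -sum1_card.
rewrite (eq_bigl (fun e => (e \in E) && (e \in symdiff E1 E2))) => [|e]; last by rewrite inE.
rewrite big_mkcondr /=; apply: eq_bigr => e _.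
by rewrite /symdiff !inE; case: (e \in E1); case: (e \in E2).
Qed.

Lemma connected_symdiff_lb (T : finType) (E1 E2 : {set {set T}}) :
  0 < #|T| -> ~~ odd #|T| -> connected_graph (symdiff E1 E2) ->
  #|T| - 1 + (odd #|E1| == odd #|E2|) <= #|symdiff E1 E2|.
Proof.
move=> Tpos Teven /connected_card_edges conn.
case: eqP => [par|_]; last by rewrite addn0 leq_subLR add1n.
have sd_even : ~~ odd #|symdiff E1 E2| by rewrite odd_symdiff par addbb.
move: conn; rewrite leq_eqVlt => /orP [/eqP Tsd|]; first by rewrite Tsd /= sd_even in Teven.
by rewrite ltnS /= subnK.
Qed.

Lemma sum_disagree (X : finType) (C : {set X}) (b : X -> bool) :
  \sum_(i in C) \sum_(j in C) (b i != b j : nat) =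
  2 * (#|C :&: [set x | b x]| * #|C :\: [set x | b x]|).
Proof.
set P := [set x | b x].
have row i : \sum_(j in C) (b i != b j : nat) =
             (~~ b i) * #|C :&: P| + b i * #|C :\: P|.
  rewrite (big_setID P) /= (eq_bigr (fun=> (~~ b i : nat))); last first.
    by move=> j; rewrite !inE => /andP [_ ->]; case: (b i).
  rewrite [X in _ + X](eq_bigr (fun=> (b i : nat))); last first.
    by move=> j; rewrite !inE => /andP [/negbTE -> _]; case: (b i).
  by rewrite !sum_nat_const mulnC [in X in _ + X]mulnC.
rewrite (eq_bigr _ (fun i _ => row i)) (big_setID P) /=.
rewrite (eq_bigr (fun=> #|C :\: P|)); last first.
  by move=> j; rewrite !inE => /andP [_ ->]; rewrite mul0n mul1n.
rewrite [X in _ + X](eq_bigr (fun=> #|C :&: P|)); last first.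
  by move=> j; rewrite !inE => /andP [/negbTE -> _]; rewrite mul0n mul1n addn0.
by rewrite !sum_nat_const [X in _ + X]mulnC addnn mul2n.
Qed.

Lemma sum_disagree_le (X : finType) (C : {set X}) (b : X -> bool) :
  \sum_(i in C) \sum_(j in C) (b i != b j : nat) <= #|C| ^ 2 %/ 2.
Proof.
rewrite sum_disagree leq_divRL // -(cardsID [set x | b x] C) mulnC mulnA.
exact: nat_AGM2.
Qed.

Section OrderedPairs.
Variables (X : finType) (C : {set X}).

Definition pair_sum (F : X -> X -> nat) : nat :=
  \sum_(i in C) \sum_(j in C :\ i) F i j.

Lemma pair_sumD (F G : X -> X -> nat) :
  pair_sum (fun i j => F i j + G i j) = pair_sum F + pair_sum G.
Proof. by rewrite /pair_sum -big_split; apply: eq_bigr => i _; rewrite big_split. Qed.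

Lemma pair_sum_le (F G : X -> X -> nat) :
  (forall i j, i \in C -> j \in C -> i != j -> F i j <= G i j) ->
  pair_sum F <= pair_sum G.
Proof.
move=> FG; apply: leq_sum => i iC; apply: leq_sum => j; rewrite !inE => /andP [ji jC].
by apply: FG; rewrite // eq_sym.
Qed.

Lemma pair_sum_const (c : nat) : pair_sum (fun _ _ => c) = #|C| * (#|C| - 1) * c.
Proof.
rewrite /pair_sum (eq_bigr (fun=> (#|C| - 1) * c)) ?sum_nat_const ?mulnA //.
by move=> i iC; rewrite sum_nat_const (cardsD1 i C) iC add1n subn1 mulnC.
Qed.

Lemma pair_sum_bool (P : X -> X -> bool) :
  pair_sum (fun i j => P i j) + pair_sum (fun i j => ~~ P i j) = #|C| * (#|C| - 1).
Proof.
by rewrite -pair_sumD -[RHS]muln1 -pair_sum_const; apply: eq_bigr => i _;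
  apply: eq_bigr => j _; case: (P i j).
Qed.

Lemma pair_sum_diag (F : X -> X -> nat) :
  (forall i, F i i = 0) -> pair_sum F = \sum_(i in C) \sum_(j in C) F i j.
Proof. by move=> F0; apply: eq_bigr => i iC; rewrite (big_setD1 i iC) F0. Qed.

End OrderedPairs.

Lemma pair_sum_symdiff_le (T : finType) (E : {set {set T}}) (C : {set {set {set T}}}) :
  (forall E', E' \in C -> E' \subset E) ->
  pair_sum C (fun E1 E2 => #|symdiff E1 E2|) <= #|C| ^ 2 %/ 2 * #|E|.
Proof.
move=> CE; rewrite pair_sum_diag; last by move=> E'; rewrite /symdiff setDv setU0 cards0.
under eq_bigr => E1 E1C do
  under eq_bigr => E2 E2C do rewrite (card_symdiff (CE _ E1C) (CE _ E2C)).
under eq_bigr => E1 _ do rewrite exchange_big.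
rewrite exchange_big /= mulnC -sum_nat_const.
by apply: leq_sum => e _; apply: sum_disagree_le.
Qed.

Lemma subset_of_card (X : finType) (A : {set X}) (k : nat) :
  k <= #|A| -> exists2 B : {set X}, B \subset A & #|B| = k.
Proof.
move=> kA; exists [set x in take k (enum A)].
  by apply/subsetP => x; rewrite inE => /mem_take; rewrite mem_enum.
by rewrite cardsE (card_uniqP _) ?take_uniq ?enum_uniq // size_takel // -cardE.
Qed.

Theorem mainTheorem13 (T : finType) (E : {set {set T}}) :
  simple_edges E -> regular E 3 -> 6 < #|T| ->
  forall C : {set {set {set T}}}, connectivity_code E C -> #|C| <= 4.
Proof.
move=> Es E3 Tgt6 C0 [C0E C0conn]; rewrite leqNgt; apply/negP => C0gt4.
have [C CC0 C5] := subset_of_card C0gt4.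
have CE E' : E' \in C -> E' \subset E by move=> E'C; apply/C0E/(subsetP CC0).
have HE := handshake Es E3.
have Teven : ~~ odd #|T| by move: (congr1 odd HE); rewrite !oddM /= => <-.
pose same_parity (E1 E2 : {set {set T}}) := odd #|E1| == odd #|E2|.
have lower : pair_sum C (fun E1 E2 => #|T| - 1 + same_parity E1 E2)
             <= pair_sum C (fun E1 E2 => #|symdiff E1 E2|).
  apply: pair_sum_le => E1 E2 E1C E2C E12.
  apply: connected_symdiff_lb; [exact: leq_trans Tgt6 | by [] |].
  by apply: C0conn => //; apply: (subsetP CC0).
have upper := pair_sum_symdiff_le CE.
have parities := pair_sum_bool C same_parity.
have mixed : pair_sum C (fun E1 E2 => ~~ same_parity E1 E2) <= 12.
  rewrite pair_sum_diag; last by move=> E'; rewrite /same_parity eqxx.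
  by have := sum_disagree_le C (fun E' => odd #|E'|); rewrite C5.
rewrite pair_sumD pair_sum_const C5 in lower; rewrite C5 in upper parities.
have sq5 : 5 ^ 2 %/ 2 = 12 by []; rewrite sq5 in upper.
move: lower upper parities mixed Tgt6 HE; lia.
Qed.
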